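(* Let $L$ be a shift having left special factors of arbitrarily large length, and let $\mu$ be a $\sigma$-invariant, nonatomic, regular Borel probability measure on $L$, positive on nonempty cylinders, with $\mu(SP_L)=0$. For each $k>0$ let $I^{(k)}_L=\{x\in I:\phi^{-1}(\iota(x))\in Cyl_L(v^{(k)})\}$, where $I=[0,1)$. Then each $I^{(k)}_L$ is a right-open interval, and $T_L$ is a translation on it: there is a constant $c_k$ with $T_L(x)=x+c_k$ for all $x\in I^{(k)}_L$.
   Context: $A$ is a finite totally ordered alphabet. $A^{\mathbb N}$ has the lexicographic order and the Cantor topology, and $\sigma$ deletes the first letter. A shift is a closed $L\subseteq A^{\mathbb N}$ with $\sigma(L)\subseteq L$. $Fact_L$ is the set of finite factors, and $Cyl_L(v)=\{w\in L:v\text{ prefix of }w\}$. For $w\le w'$ in $L$, $[w,w']=\{w''\in L:w\le w''\le w'\}$, and $w_{L,min}=\min L$. A factor $u$ is left special if $bu\in Fact_L$ for at least two letters $b$. $SP_L$ is the set of infinite words all of whose prefixes are left special. $\{v^{(k)}\}_{k>0}$ enumerates the words $au\in Fact_L$ ($a\in A$, $u$ nonempty) with $u$ not left special and every nonempty proper prefix of $u$ left special. Construction. Put $\phi_\mu(w)=\mu([w_{L,min},w])$. Let $Z_0$ be the set of $x\in[0,1]$ with $|\phi_\mu^{-1}(x)|\ge 2$; each such preimage consists of exactly two consecutive words. Let $\hat I=[0,1]\sqcup Z_0^-$, where $Z_0^-=\{z^-:z\in Z_0\}$ is a disjoint copy of $Z_0$. Order $\hat I$ so that $z^-<z$ with nothing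 in between, extending the order of $[0,1]$, and give it the order topology. Let $\iota$ be the inclusion $[0,1]\to\hat I$, and let $\kappa:\hat I\to[0,1]$ be the identity on $[0,1]$ with $z^-\mapsto z$. Define $\phi(w)=(\phi_\mu(w))^-$ if $\phi_\mu^{-1}(\phi_\mu(w))=\{w,w'\}$ with $w<w'$, and $\phi(w)=\phi_\mu(w)$ otherwise. Set $\hat T=\phi\circ\sigma\circ\phi^{-1}$ and $T_L=\kappa\circ\hat T\circ\iota:[0,1]\to[0,1]$. *)

From Stdlib Require Import Reals List Classical ClassicalEpsilon.
Open Scope R_scope.
Set Implicit Arguments.

Definition word (A : Type) := nat -> A.

Definition finite_total_alphabet (A : Type) (ltA : A -> A -> Prop) : Prop :=
  (exists l : list A, forall a, In a l) /\
  (forall a, ~ ltA a a) /\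
  (forall a b c, ltA a b -> ltA b c -> ltA a c) /\
  (forall a b, a = b \/ ltA a b \/ ltA b a).

Definition shift (A : Type) (w : word A) : word A := fun n => w (S n).

Definition lexlt (A : Type) (ltA : A -> A -> Prop) (w w' : word A) : Prop :=
  exists n, (forall i, (i < n)%nat -> w i = w' i) /\ ltA (w n) (w' n).
Definition lexle (A : Type) (ltA : A -> A -> Prop) (w w' : word A) : Prop :=
  w = w' \/ lexlt ltA w w'.

Definition prefix (A : Type) (v : list A) (w : word A) : Prop :=
  forall i, (i < length v)%nat -> nth_error v i = Some (w i).

Definition agree (A : Type) (n : nat) (w w' : word A) : Prop :=
  forall i, (i < n)%nat -> w i = w' i.
Definition is_open (A : Type) (U : word A -> Prop) : Prop :=
  forall w, U w -> exists n, forall w', agree n w w' -> U w'.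
Definition is_closed (A : Type) (K : word A -> Prop) : Prop :=
  forall w, (forall n, exists w', K w' /\ agree n w w') -> K w.

Definition is_shift (A : Type) (L : word A -> Prop) : Prop :=
  is_closed L /\ (forall w, L w -> L (shift w)).

Definition Fact (A : Type) (L : word A -> Prop) (v : list A) : Prop :=
  exists w, L w /\ exists n, forall i, (i < length v)%nat -> nth_error v i = Some (w (n + i)%nat).

Definition Cyl (A : Type) (L : word A -> Prop) (v : list A) (w : word A) : Prop :=
  L w /\ prefix v w.

Definition left_special (A : Type) (L : word A -> Prop) (u : list A) : Prop :=
  exists b b', b <> b' /\ Fact L (b :: u) /\ Fact L (b' :: u).

Fixpoint wprefix (A : Type) (w : word A) (n : nat) : list A :=
  match n with
  | O => nil
  | S m => wprefix w m ++ (w m :: nil)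
  end.

Definition SP_set (A : Type) (L : word A -> Prop) (w : word A) : Prop :=
  forall n, left_special L (wprefix w n).

(** The words v^{(k)}: a u in Fact_L, u nonempty, u not left special, every
    nonempty proper prefix of u left special. (The set enumerated by k.) *)
Definition is_v_word (A : Type) (L : word A -> Prop) (v : list A) : Prop :=
  exists a u, v = a :: u /\ Fact L v /\ u <> nil /\ ~ left_special L u /\
    (forall m, (1 <= m)%nat -> (m < length u)%nat -> left_special L (firstn m u)).

Inductive borel (A : Type) : (word A -> Prop) -> Prop :=
| borel_cyl : forall v : list A, borel (fun w => prefix v w)
| borel_compl : forall E, borel E -> borel (fun w => ~ E w)
| borel_union : forall F : nat -> word A -> Prop,
    (forall n, borel (F n)) -> borel (fun w => exists n, F n w)
| borel_ext : forall E E', borel E -> (forall w, E w <-> E' w) -> borel E'.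

Definition inter (A : Type) (E F : word A -> Prop) : word A -> Prop :=
  fun w => E w /\ F w.

(** mu : a Borel probability measure on L, given as a set function whose
    values on the Borel subsets E /\ L of L are meaningful. *)
Definition borel_prob_measure_on (A : Type) (L : word A -> Prop)
  (mu : (word A -> Prop) -> R) : Prop :=
  (forall P Q, (forall w, P w <-> Q w) -> mu P = mu Q) /\
  (forall E, borel E -> 0 <= mu (inter E L)) /\
  mu L = 1 /\
  (forall F : nat -> word A -> Prop,
     (forall n, borel (F n)) ->
     (forall n m w, n <> m -> L w -> F n w -> F m w -> False) ->
     infinite_sum (fun n => mu (inter (F n) L)) (mu (inter (fun w => exists n, F n w) L))).

Definition sigma_invariant (A : Type) (L : word A -> Prop) (mu : (word A -> Prop) -> R) : Prop :=
  forall E, borel E -> mu (inter (fun w => E (shift w)) L) = mu (inter E L).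

Definition nonatomic (A : Type) (L : word A -> Prop) (mu : (word A -> Prop) -> R) : Prop :=
  forall E, borel E -> 0 < mu (inter E L) ->
    exists F, borel F /\ (forall w, L w -> F w -> E w) /\
      0 < mu (inter F L) < mu (inter E L).

(** Regular: outer regular by open sets, inner regular by compact sets
    (compact subsets of the Cantor space A^N, A finite, are exactly the closed ones). *)
Definition regular (A : Type) (L : word A -> Prop) (mu : (word A -> Prop) -> R) : Prop :=
  forall E, borel E ->
    (forall eps, 0 < eps -> exists U, is_open U /\ (forall w, L w -> E w -> U w) /\
        mu (inter U L) <= mu (inter E L) + eps) /\
    (forall eps, 0 < eps -> exists K, is_closed K /\ (forall w, L w -> K w -> E w) /\
        mu (inter E L) - eps <= mu (inter K L)).

Definition positive_on_cylinders (A : Type) (L : word A -> Prop) (mu : (word A -> Prop) -> R) : Prop :=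
  forall v, (exists w, Cyl L v w) -> 0 < mu (Cyl L v).

(** phi_mu(w) = mu([w_{L,min}, w]); since w_{L,min} = min L, the interval
    [w_{L,min}, w] is literally {w'' in L | w'' <= w}. *)
Definition phi_mu (A : Type) (ltA : A -> A -> Prop) (L : word A -> Prop)
  (mu : (word A -> Prop) -> R) (w : word A) : R :=
  mu (fun w'' => L w'' /\ lexle ltA w'' w).

(** Ihat = [0,1] ⊔ Z_0^-, represented as pairs (x, b): (x,false) is x, (x,true) is x^-.
    Only (z,true) with z in Z_0 are genuine elements; phi only takes such values. *)
Definition Ihat := (R * bool)%type.
Definition iota (x : R) : Ihat := (x, false).
Definition kappa (p : Ihat) : R := fst p.

Definition lower_of_pair (A : Type) (ltA : A -> A -> Prop) (L : word A -> Prop)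
  (mu : (word A -> Prop) -> R) (w : word A) : Prop :=
  exists w', L w' /\ lexlt ltA w w' /\ phi_mu ltA L mu w' = phi_mu ltA L mu w.

Definition phi (A : Type) (ltA : A -> A -> Prop) (L : word A -> Prop)
  (mu : (word A -> Prop) -> R) (w : word A) : Ihat :=
  (phi_mu ltA L mu w,
   if excluded_middle_informative (lower_of_pair ltA L mu w) then true else false).

(** Graph of T_L = kappa o phi o sigma o phi^{-1} o iota (phi^{-1} on L). *)
Definition T_L_graph (A : Type) (ltA : A -> A -> Prop) (L : word A -> Prop)
  (mu : (word A -> Prop) -> R) (x y : R) : Prop :=
  exists w, L w /\ phi ltA L mu w = iota x /\ y = kappa (phi ltA L mu (shift w)).

Definition I_k (A : Type) (ltA : A -> A -> Prop) (L : word A -> Prop)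
  (mu : (word A -> Prop) -> R) (v : list A) (x : R) : Prop :=
  0 <= x < 1 /\ exists w, L w /\ phi ltA L mu w = iota x /\ Cyl L v w.

From Stdlib Require Import Reals List Classical ClassicalEpsilon Lra Lia FunctionalExtensionality Wf_nat.
Open Scope R_scope.
Set Implicit Arguments.

(* Write [Phi w = mu {t in L | t <= w}].  As mu has no atoms and is regular, [Phi] is
   continuous and onto [[0,1]], and the words [w] with [phi w = iota x] are exactly the
   largest words with [Phi w = x].  The cylinder of [v] is an order-interval of [L] of
   positive measure, so these words lie in it exactly when [x] lies in
   [[mu(below v), mu(below v) + mu(Cyl v))].  For [v = a :: u] with [u] not left special,
   every word of [L] whose shift starts with [u] starts with [a]; so [shift] maps
   [Cyl v /\ {t <= w}] onto [Cyl u /\ {t <= shift w}] and, by invariance of mu,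
   [Phi (shift w) - Phi w = mu(below u) - mu(below v)] on [Cyl v]. *)

Lemma least_nat (P : nat -> Prop) :
  (exists n, P n) -> exists n, P n /\ forall m, (m < n)%nat -> ~ P m.
Proof.
  intros Hex.
  destruct (dec_inh_nat_subset_has_unique_least_element P (fun n => classic (P n)) Hex)
    as [n [[Pn Hmin] _]].
  exists n; split; auto. intros m Hm Pm. specialize (Hmin m Pm). lia.
Qed.

Section Agree.

Variable A : Type.
Implicit Types w t s : word A.

Lemma agree_refl n w : agree n w w.
Proof. now intros i _. Qed.

Lemma agree_sym n w w' : agree n w w' -> agree n w' w.
Proof. intros H i Hi; symmetry; auto. Qed.

Lemma agree_trans n w1 w2 w3 : agree n w1 w2 -> agree n w2 w3 -> agree n w1 w3.
Proof. intros H1 H2 i Hi; rewrite H1; auto. Qed.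

Lemma agree_weaken n m w w' : (n <= m)%nat -> agree m w w' -> agree n w w'.
Proof. intros H1 H2 i Hi; apply H2; lia. Qed.

Definition cylindrical n (P : word A -> Prop) : Prop :=
  forall t t', agree n t t' -> P t -> P t'.

Lemma cylindrical_closed n (P : word A -> Prop) : cylindrical n P -> is_closed P.
Proof.
  intros H w Hw. destruct (Hw n) as [w' [Pw' Ag]]. exact (H w' w (agree_sym Ag) Pw').
Qed.

Lemma cylindrical_prefix (p : list A) : cylindrical (length p) (prefix p).
Proof. intros t t' Ag H i Hi. rewrite <- Ag; auto. Qed.

Lemma cylindrical_agree n s : cylindrical n (agree n s).
Proof. intros t t' Ag H. eapply agree_trans; eauto. Qed.

Lemma closed_and (S1 S2 : word A -> Prop) :
  is_closed S1 -> is_closed S2 -> is_closed (fun w => S1 w /\ S2 w).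
Proof.
  intros H1 H2 w Hw. split.
  - apply H1. intros n; destruct (Hw n) as [w' [[] ?]]; eauto.
  - apply H2. intros n; destruct (Hw n) as [w' [[] ?]]; eauto.
Qed.

Lemma prefix_cons (a : A) u t : prefix (a :: u) t <-> t O = a /\ prefix u (shift t).
Proof.
  split.
  - intros H. split.
    + assert (E : Some a = Some (t O)) by (apply (H O); simpl; lia). now injection E.
    + intros i Hi. apply (H (S i)). simpl; lia.
  - intros [H1 H2] [|i] Hi; simpl.
    + now rewrite H1.
    + apply H2. simpl in Hi; lia.
Qed.

End Agree.

Section BorelSets.

Variable A : Type.
Implicit Types E F U : word A -> Prop.
Implicit Types s t w : word A.

Lemma borel_full : borel (fun _ : word A => True).
Proof.
  apply (borel_ext _ (borel_cyl (@nil A))). intros w; split; auto.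
  intros _ i Hi; simpl in Hi; lia.
Qed.

Lemma borel_empty : borel (fun _ : word A => False).
Proof. apply (borel_ext _ (borel_compl borel_full)). tauto. Qed.

Lemma borel_or E F : borel E -> borel F -> borel (fun w => E w \/ F w).
Proof.
  intros HE HF.
  apply (borel_ext _ (borel_union (fun n => match n with O => E | _ => F end)
                      (fun n => match n with O => HE | _ => HF end))).
  intros w; split.
  - intros [[|n] H]; auto.
  - intros [H|H]; [exists O | exists 1%nat]; auto.
Qed.

Lemma borel_and E F : borel E -> borel F -> borel (fun w => E w /\ F w).
Proof.
  intros HE HF.
  apply (borel_ext _ (borel_compl (borel_or (borel_compl HE) (borel_compl HF)))).
  intros w; split; [intros H; split; apply NNPP|]; tauto.
Qed.

Context {l : list A} (l_full : forall a, In a l).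

Lemma borel_ex_letter (G : A -> word A -> Prop) :
  (forall b, borel (G b)) -> borel (fun w => exists b, G b w).
Proof.
  intros HG.
  assert (HF : forall k, borel (fun w => exists b, nth_error l k = Some b /\ G b w)).
  { intros k. destruct (nth_error l k) as [b|] eqn:Ek.
    - apply (borel_ext _ (HG b)). intros w; split.
      + intros H; exists b; auto.
      + now intros [b' [[= <-] H]].
    - apply (borel_ext _ borel_empty). intros w; split; [tauto|].
      now intros [b' [H _]]. }
  apply (borel_ext _ (borel_union _ HF)). intros w; split.
  - intros [k [b [_ H]]]; eauto.
  - intros [b H]. destruct (In_nth_error l b (l_full b)) as [k Hk]. eauto.
Qed.

Lemma borel_preimage_shift E : borel E -> borel (fun w => E (shift w)).
Proof.
  induction 1 as [v| |F HF IH|E E' _ IH HE].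
  - apply (borel_ext _ (borel_ex_letter (fun b => prefix (b :: v)) (fun b => borel_cyl _))).
    intros w; split.
    + intros [b Hb]. now apply prefix_cons in Hb.
    + intros Hp. exists (w O). now apply prefix_cons.
  - exact (borel_compl IHborel).
  - exact (borel_union (fun n w => F n (shift w)) IH).
  - exact (borel_ext _ IH (fun w => HE (shift w))).
Qed.

Definition wcons (b : A) (t : word A) : word A :=
  fun i => match i with O => b | S j => t j end.

Lemma borel_cylindrical n (P : word A -> Prop) : cylindrical n P -> borel P.
Proof.
  revert P; induction n as [|n IH]; intros P HS.
  - destruct (classic (exists t, P t)) as [[t0 Pt0]|Hno].
    + apply (borel_ext _ borel_full). intros w; split; auto.
      intros _. apply (HS t0); auto. intros i Hi; lia.
    + apply (borel_ext _ borel_empty). intros w; split; [tauto|eauto].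
  - (* split [P] according to the first letter *)
    assert (HB : forall b, borel (fun w => prefix (b :: nil) w /\ P (wcons b (shift w)))).
    { intros b. apply borel_and; [apply borel_cyl|].
      apply (borel_preimage_shift (E := fun t => P (wcons b t))).
      apply IH. intros t t' Ag. apply HS. intros [|i] Hi; simpl; auto. apply Ag; lia. }
    apply (borel_ext _ (borel_ex_letter _ HB)). intros w; split.
    + intros [b [Hp Pb]]. apply prefix_cons in Hp as [<- _].
      apply (HS (wcons (w O) (shift w))); auto. intros [|i] Hi; reflexivity.
    + intros Pw. exists (w O). split.
      * apply prefix_cons; split; auto. intros i Hi; simpl in Hi; lia.
      * apply (HS w); auto. intros [|i] Hi; reflexivity.
Qed.

Lemma borel_eq s : borel (fun t => t = s).
Proof.
  assert (B : borel (fun t => ~ exists n, ~ agree n s t)).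
  { apply borel_compl, borel_union. intros n.
    apply borel_compl, (borel_cylindrical (cylindrical_agree (n := n) (s := s))). }
  apply (borel_ext _ B). intros t; split.
  - intros H. apply functional_extensionality; intros i. apply NNPP; intros Hne.
    apply H. exists (S i). intros Ha. apply Hne. symmetry. apply Ha. lia.
  - intros -> [n Hn]. apply Hn, agree_refl.
Qed.

Lemma borel_open U : is_open U -> borel U.
Proof.
  intros HU.
  assert (B : borel (fun t => exists n, forall t', agree n t t' -> U t')).
  { apply borel_union. intros n. apply (borel_cylindrical (n := n)).
    intros t t' Ag H t'' Ag'. apply H. eapply agree_trans; eauto. }
  apply (borel_ext _ B). intros t; split.
  - intros [n Hn]. apply Hn, agree_refl.
  - intros Ht. destruct (HU t Ht) as [n Hn]; eauto.
Qed.

Lemma borel_lexle (lt : A -> A -> Prop) s : borel (fun t => lexle lt t s).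
Proof.
  assert (B : borel (fun t => t = s \/ exists n, agree n t s /\ lt (t n) (s n))).
  { apply borel_or; [apply borel_eq|]. apply borel_union. intros n.
    apply (borel_cylindrical (n := S n)). intros t t' Ag [H1 H2]. split.
    - intros i Hi. rewrite <- H1, Ag; auto; lia.
    - rewrite <- Ag; auto. }
  apply (borel_ext _ B). reflexivity.
Qed.

End BorelSets.
Section Lexicographic.

Variables (A : Type) (ltA : A -> A -> Prop).
Hypothesis ltA_fta : finite_total_alphabet ltA.
Implicit Types s t w : word A.
Implicit Types p : list A.

Lemma ltA_irrefl a : ~ ltA a a.
Proof. apply ltA_fta. Qed.

Lemma ltA_trans a b c : ltA a b -> ltA b c -> ltA a c.
Proof. apply ltA_fta. Qed.

Lemma ltA_total a b : a = b \/ ltA a b \/ ltA b a.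
Proof. apply ltA_fta. Qed.

Lemma lexlt_irrefl w : ~ lexlt ltA w w.
Proof. intros [n [_ H]]. exact (ltA_irrefl H). Qed.

Lemma lexlt_trans w1 w2 w3 : lexlt ltA w1 w2 -> lexlt ltA w2 w3 -> lexlt ltA w1 w3.
Proof.
  intros [n [Hn Ln]] [m [Hm Lm]].
  destruct (Nat.lt_trichotomy n m) as [H|[<-|H]].
  - exists n; split; [intros i Hi; rewrite Hn, Hm; auto; lia|]. now rewrite <- (Hm n H).
  - exists n; split; [intros i Hi; rewrite Hn, Hm; auto|]. eapply ltA_trans; eauto.
  - exists m; split; [intros i Hi; rewrite Hn, Hm; auto; lia|]. now rewrite (Hn m H).
Qed.

Lemma lexle_lexlt_contra w1 w2 : lexle ltA w1 w2 -> lexlt ltA w2 w1 -> False.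
Proof.
  intros [<-|H1] H2; [exact (lexlt_irrefl H2)|].
  exact (lexlt_irrefl (lexlt_trans H1 H2)).
Qed.

Lemma lexle_trans w1 w2 w3 : lexle ltA w1 w2 -> lexle ltA w2 w3 -> lexle ltA w1 w3.
Proof.
  intros [<-|H1] [<-|H2]; unfold lexle; auto. right; eapply lexlt_trans; eauto.
Qed.

Lemma lex_trichotomy w1 w2 : w1 = w2 \/ lexlt ltA w1 w2 \/ lexlt ltA w2 w1.
Proof.
  destruct (classic (exists i, w1 i <> w2 i)) as [Hex|Hno].
  - destruct (least_nat _ Hex) as [n [Hn Hm]].
    assert (Ha : forall i, (i < n)%nat -> w1 i = w2 i) by (intros i Hi; apply NNPP, Hm; auto).
    destruct (ltA_total (w1 n) (w2 n)) as [E|[E|E]]; [tauto| |].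
    + right; left. exists n; auto.
    + right; right. exists n; split; auto. intros i Hi; symmetry; auto.
  - left. apply functional_extensionality. intros i. apply NNPP. eauto.
Qed.

Lemma lexle_or_lexlt w1 w2 : lexle ltA w1 w2 \/ lexlt ltA w2 w1.
Proof. destruct (lex_trichotomy w1 w2) as [E|[E|E]]; unfold lexle; tauto. Qed.

Lemma agree_of_between n s s' t :
  agree n s s' -> lexlt ltA s' t -> lexle ltA t s -> agree n s t.
Proof.
  intros Hag [j [Hj Lj]] [<-|[k [Hk Lk]]]; [apply agree_refl|].
  destruct (Nat.lt_ge_cases j n) as [Hjn|Hnj].
  - exfalso. destruct (Nat.lt_trichotomy k j) as [H|[<-|H]].
    + rewrite (Hag k ltac:(lia)), (Hj k H) in Lk. exact (ltA_irrefl Lk).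
    + rewrite (Hag k Hjn) in Lk. exact (ltA_irrefl (ltA_trans Lj Lk)).
    + rewrite (Hk j H), (Hag j Hjn) in Lj. exact (ltA_irrefl Lj).
  - intros i Hi. rewrite <- Hj by lia. apply Hag; auto.
Qed.

Lemma lexle_shift t w : t O = w O -> (lexle ltA (shift t) (shift w) <-> lexle ltA t w).
Proof.
  intros E. split.
  - intros [H|[n [Hn Ln]]].
    + left. apply functional_extensionality. intros [|i]; auto.
      change (shift t i = shift w i). now rewrite H.
    + right. exists (S n). split; auto. intros [|i] Hi; auto. apply Hn. lia.
  - intros [<-|[[|n] [Hn Ln]]].
    + now left.
    + rewrite E in Ln. now destruct (ltA_irrefl Ln).
    + right. exists n. split; auto. intros i Hi. apply (Hn (S i)). lia.
Qed.

Lemma exists_least_letter (P : A -> Prop) :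
  (exists b, P b) -> exists b, P b /\ forall b', P b' -> ~ ltA b' b.
Proof.
  destruct ltA_fta as [[l Hl] _].
  assert (Hgen : forall l', (exists b, In b l' /\ P b) ->
                 exists b, P b /\ forall b', In b' l' -> P b' -> ~ ltA b' b).
  { induction l' as [|x l' IH]; intros [b [Hb Pb]]; [destruct Hb|].
    destruct (classic (exists b, In b l' /\ P b)) as [Hex|Hno].
    - destruct (IH Hex) as [c [Pc Hc]].
      destruct (classic (P x /\ ltA x c)) as [[Px Lx]|Hn].
      + exists x; split; auto. intros b' [<-|Hb'] Pb'; [apply ltA_irrefl|].
        intros L'; exact (Hc b' Hb' Pb' (ltA_trans L' Lx)).
      + exists c; split; auto. intros b' [<-|Hb'] Pb'; auto.
    - destruct Hb as [<-|Hb]; [|exfalso; eauto].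
      exists x; split; auto. intros b' [<-|Hb'] Pb'; [apply ltA_irrefl|exfalso; eauto]. }
  intros [b Pb]. destruct (Hgen l) as [c [Pc Hc]]; eauto.
Qed.

(* The minimum is built letter by letter: [ws (k+1)] is a word of [P] agreeing with
   [ws k] before position [k] whose letter at [k] is least possible. *)
Lemma closed_has_min (P : word A -> Prop) :
  is_closed P -> (exists s, P s) -> exists m, P m /\ forall s, P s -> lexle ltA m s.
Proof.
  intros HC [s0 Ps0].
  set (Step := fun k w s => P s /\ agree k s w /\
                 forall s', P s' -> agree k s' w -> ~ ltA (s' k) (s k)).
  assert (Hstep : forall k w, P w -> exists s, Step k w s).
  { intros k w Pw.
    destruct (exists_least_letter (fun b => exists s, P s /\ agree k s w /\ s k = b))
      as [b [[s [Ps [As <-]]] Hb]]; [exists (w k), w; auto using agree_refl|].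
    exists s. repeat split; auto. intros s' Ps' As'. apply Hb. eauto. }
  set (ws := fix ws (n : nat) : word A :=
         match n with O => s0 | S k => epsilon (inhabits s0) (Step k (ws k)) end).
  assert (Hws : forall n, P (ws n) /\ Step n (ws n) (ws (S n))).
  { induction n as [|n IH].
    - split; auto. apply epsilon_spec, Hstep; auto.
    - split; [apply IH|]. apply epsilon_spec, Hstep, IH. }
  assert (Hag : forall n m, (n <= m)%nat -> agree n (ws m) (ws n)).
  { induction 1; [apply agree_refl|].
    apply agree_trans with (ws m); auto. apply agree_weaken with m; auto. apply Hws. }
  set (m := fun i => ws (S i) i).
  assert (Hm : forall n, agree n m (ws n)).
  { intros n i Hi. unfold m. symmetry. apply (Hag (S i) n); lia. }
  assert (Pm : P m) by (apply HC; intros n; exists (ws n); split; [apply Hws|apply Hm]).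
  exists m; split; auto. intros s Ps.
  destruct (lexle_or_lexlt m s) as [H|[n [Hn Ln]]]; auto. exfalso.
  destruct (proj2 (Hws n)) as [_ [_ Hmin]].
  exact (Hmin s Ps (agree_trans Hn (Hm n)) Ln).
Qed.

(* [below_cyl p t] ([above_cyl p t]): [t] leaves the cylinder of [p] downwards (upwards). *)
Definition below_cyl p t : Prop :=
  exists n c, (n < length p)%nat /\ (forall i, (i < n)%nat -> nth_error p i = Some (t i)) /\
    nth_error p n = Some c /\ ltA (t n) c.
Definition above_cyl p t : Prop :=
  exists n c, (n < length p)%nat /\ (forall i, (i < n)%nat -> nth_error p i = Some (t i)) /\
    nth_error p n = Some c /\ ltA c (t n).

Lemma cyl_trichotomy p t : below_cyl p t \/ prefix p t \/ above_cyl p t.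
Proof.
  destruct (classic (prefix p t)) as [H|H]; [tauto|].
  assert (Hex : exists i, (i < length p)%nat /\ nth_error p i <> Some (t i)).
  { apply NNPP; intros Hn; apply H; intros i Hi. apply NNPP; intros Hne; apply Hn; eauto. }
  destruct (least_nat _ Hex) as [n [[Hn1 Hn2] Hm]].
  assert (Hpre : forall i, (i < n)%nat -> nth_error p i = Some (t i)).
  { intros i Hi. apply NNPP; intros Hne. apply (Hm i Hi). split; auto; lia. }
  destruct (nth_error p n) as [c|] eqn:Ec; [|apply nth_error_None in Ec; lia].
  destruct (ltA_total (t n) c) as [<-|[E|E]]; [tauto| |].
  - left; exists n, c; auto.
  - right; right; exists n, c; auto.
Qed.

Lemma lexlt_below_cyl p w t : prefix p w -> below_cyl p t -> lexlt ltA t w.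
Proof.
  intros Hw [n [c [Hn [Hi [Hc L]]]]]. rewrite (Hw n Hn) in Hc. injection Hc as <-.
  exists n; split; auto. intros i Hi'. specialize (Hi i Hi').
  rewrite (Hw i) in Hi by lia. now injection Hi.
Qed.

Lemma lexlt_above_cyl p w t : prefix p w -> above_cyl p t -> lexlt ltA w t.
Proof.
  intros Hw [n [c [Hn [Hi [Hc L]]]]]. rewrite (Hw n Hn) in Hc. injection Hc as <-.
  exists n; split; auto. intros i Hi'. specialize (Hi i Hi').
  rewrite (Hw i) in Hi by lia. now injection Hi.
Qed.

Lemma below_cyl_not_prefix p t : below_cyl p t -> ~ prefix p t.
Proof. intros H1 H2. exact (lexlt_irrefl (lexlt_below_cyl H2 H1)). Qed.

Lemma cylindrical_below_cyl p : cylindrical (length p) (below_cyl p).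
Proof.
  intros t t' Ag [n [c [Hn [Hi [Hc L]]]]]. exists n, c. repeat split; auto.
  - intros i Hi'. rewrite <- Ag by lia. auto.
  - rewrite <- Ag; auto.
Qed.

Lemma cylindrical_above_cyl p : cylindrical (length p) (above_cyl p).
Proof.
  intros t t' Ag [n [c [Hn [Hi [Hc L]]]]]. exists n, c. repeat split; auto.
  - intros i Hi'. rewrite <- Ag by lia. auto.
  - rewrite <- Ag; auto.
Qed.

End Lexicographic.

Lemma finite_total_alphabet_flip (A : Type) (ltA : A -> A -> Prop) :
  finite_total_alphabet ltA -> finite_total_alphabet (fun a b => ltA b a).
Proof.
  intros [H1 [H2 [H3 H4]]]. repeat split; eauto.
  intros a b; destruct (H4 a b); tauto.
Qed.

Lemma lexle_flip (A : Type) (ltA : A -> A -> Prop) (w1 w2 : word A) :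
  lexle (fun a b => ltA b a) w1 w2 -> lexle ltA w2 w1.
Proof.
  intros [E|[n [Hn Ln]]]; [now left|right]. exists n; split; auto.
  intros i Hi; symmetry; auto.
Qed.

Lemma closed_has_max (A : Type) (ltA : A -> A -> Prop) (P : word A -> Prop) :
  finite_total_alphabet ltA -> is_closed P -> (exists s, P s) ->
  exists m, P m /\ forall s, P s -> lexle ltA s m.
Proof.
  intros Hfta HC Hne.
  destruct (closed_has_min (finite_total_alphabet_flip Hfta) HC Hne) as [m [Pm Hm]].
  exists m; split; auto. intros s Ps. apply lexle_flip; auto.
Qed.

Section FinitelyAdditive.

Variables (A : Type) (L : word A -> Prop) (mu : (word A -> Prop) -> R).
Hypothesis mu_prob : borel_prob_measure_on L mu.
Implicit Types E F : word A -> Prop.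

Lemma mu_ext E F : (forall w, L w -> (E w <-> F w)) -> mu (inter E L) = mu (inter F L).
Proof.
  intros H. apply (proj1 mu_prob). intros w; unfold inter; split;
  intros [H1 H2]; split; auto; apply (H w H2); auto.
Qed.

Lemma mu_nonneg E : borel E -> 0 <= mu (inter E L).
Proof. apply mu_prob. Qed.

Lemma mu_full : mu (inter (fun _ => True) L) = 1.
Proof.
  destruct mu_prob as [Hx [_ [H1 _]]]. rewrite <- H1. apply Hx.
  intros w; unfold inter; tauto.
Qed.

Lemma mu_empty : mu (inter (fun _ => False) L) = 0.
Proof.
  destruct mu_prob as [_ [_ [_ Hadd]]].
  set (c := mu (inter (fun _ => False) L)).
  assert (Hc : infinite_sum (fun _ => c) c).
  { specialize (Hadd (fun _ _ => False) (fun _ => borel_empty A) ltac:(tauto)).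
    rewrite (mu_ext _ (fun _ => False)) in Hadd; [exact Hadd|].
    intros w _; split; [intros [_ []]|tauto]. }
  (* the partial sums [(N+1) c] converge to [c] *)
  destruct (Req_dec c 0) as [|Hne]; auto. exfalso.
  destruct (Hc _ (Rabs_pos_lt c Hne)) as [N HN]. specialize (HN (S N) ltac:(lia)).
  rewrite sum_cte in HN. unfold Rdist in HN.
  replace (c * INR (S (S N)) - c) with (INR (S N) * c) in HN by (rewrite (S_INR (S N)); ring).
  rewrite Rabs_mult, Rabs_pos_eq in HN by apply pos_INR.
  assert (1 <= INR (S N)) by (rewrite S_INR; pose proof (pos_INR N); lra).
  pose proof (Rabs_pos_lt c Hne). nra.
Qed.

Lemma mu_add E F : borel E -> borel F -> (forall w, L w -> E w -> F w -> False) ->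
  mu (inter (fun w => E w \/ F w) L) = mu (inter E L) + mu (inter F L).
Proof.
  intros BE BF Hd.
  set (G := fun n => match n with O => E | 1%nat => F | _ => fun _ : word A => False end).
  assert (BG : forall n, borel (G n)) by (intros [|[|n]]; simpl; auto using borel_empty).
  assert (DG : forall n m w, n <> m -> L w -> G n w -> G m w -> False).
  { intros [|[|n]] [|[|m]] w Hnm Lw; simpl; try tauto; try lia; eauto. }
  pose proof (proj2 (proj2 (proj2 mu_prob)) G BG DG) as Hsum.
  rewrite (mu_ext _ (fun w => exists n, G n w)).
  2: { intros w _; split.
       - intros [H|H]; [exists O|exists 1%nat]; auto.
       - intros [[|[|n]] H]; simpl in H; tauto. }
  apply (uniqueness_sum _ _ _ Hsum).
  intros eps He. exists 1%nat. intros n Hn.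
  replace (sum_f_R0 (fun n => mu (inter (G n) L)) n) with (mu (inter E L) + mu (inter F L)).
  { unfold Rdist. rewrite Rminus_diag, Rabs_R0. lra. }
  induction n as [|[|n] IH]; [lia|reflexivity|].
  simpl sum_f_R0 in *. rewrite <- IH by lia. simpl G. rewrite mu_empty. ring.
Qed.

Lemma mu_mono E F : borel E -> borel F -> (forall w, L w -> E w -> F w) ->
  mu (inter E L) <= mu (inter F L).
Proof.
  intros BE BF H.
  assert (BD : borel (fun w => F w /\ ~ E w)) by auto using borel_and, borel_compl.
  rewrite (mu_ext F (fun w => E w \/ (F w /\ ~ E w))) by (intros w Lw; firstorder tauto).
  rewrite (mu_add BE BD) by tauto.
  pose proof (mu_nonneg BD). lra.
Qed.

Lemma mu_subadd E F : borel E -> borel F ->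
  mu (inter (fun w => E w \/ F w) L) <= mu (inter E L) + mu (inter F L).
Proof.
  intros BE BF.
  assert (BD : borel (fun w => F w /\ ~ E w)) by auto using borel_and, borel_compl.
  rewrite (mu_ext _ (fun w => E w \/ (F w /\ ~ E w))) by (intros w Lw; tauto).
  rewrite (mu_add BE BD) by tauto.
  pose proof (mu_mono BD BF (fun w _ H => proj1 H)). lra.
Qed.

Lemma mu_le1 E : borel E -> mu (inter E L) <= 1.
Proof. intros BE. rewrite <- mu_full. apply mu_mono; auto using borel_full. Qed.

Lemma mu_ge1_of_cover E : borel E -> (forall w, L w -> E w) -> 1 <= mu (inter E L).
Proof. intros BE H. rewrite <- mu_full. apply mu_mono; auto using borel_full. Qed.

End FinitelyAdditive.

Lemma cyl_nonempty_of_Fact (A : Type) (L : word A -> Prop) v :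
  is_shift L -> Fact L v -> exists w, Cyl L v w.
Proof.
  intros [_ HL] [w [Lw [n Hn]]].
  assert (Hiter : forall i, Nat.iter n (@shift A) w i = w (n + i)%nat).
  { clear Hn. induction n as [|n IH]; intros i; simpl; auto.
    unfold shift at 1. rewrite IH. f_equal; lia. }
  exists (Nat.iter n (@shift A) w). split.
  - clear Hn Hiter. induction n; simpl; auto.
  - intros i Hi. rewrite Hiter. auto.
Qed.

Lemma first_letter_forced (A : Type) (L : word A -> Prop) (a : A) u t :
  ~ left_special L u -> Fact L (a :: u) -> L t -> prefix u (shift t) -> t O = a.
Proof.
  intros Hu Fau Lt Pt. apply NNPP; intros Hne. apply Hu. exists (t O), a.
  repeat split; auto. exists t. split; auto. exists O. apply prefix_cons; auto.
Qed.

Lemma phi_iota_iff (A : Type) (ltA : A -> A -> Prop) (L : word A -> Prop) mu w x :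
  phi ltA L mu w = iota x <-> phi_mu ltA L mu w = x /\ ~ lower_of_pair ltA L mu w.
Proof.
  unfold phi, iota.
  destruct (excluded_middle_informative (lower_of_pair ltA L mu w)) as [H|H].
  - split; [discriminate|tauto].
  - split; [now intros [= ->]|now intros [<- _]].
Qed.

Section DistributionFunction.

Variables (A : Type) (ltA : A -> A -> Prop) (L : word A -> Prop).
Variable mu : (word A -> Prop) -> R.
Context {l : list A} (l_full : forall a, In a l).
Hypothesis ltA_fta : finite_total_alphabet ltA.
Hypothesis L_closed : is_closed L.
Hypothesis mu_prob : borel_prob_measure_on L mu.
Hypothesis mu_nonatomic : nonatomic L mu.
Hypothesis mu_regular : regular L mu.
Hypothesis mu_invariant : sigma_invariant L mu.
Hypothesis mu_cyl_pos : positive_on_cylinders L mu.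
Implicit Types s t w : word A.

Local Notation Phi := (phi_mu ltA L mu).
Local Notation lexle := (lexle ltA).
Local Notation lexlt := (lexlt ltA).

Let borel_le s : borel (fun t => lexle t s) := borel_lexle l_full ltA s.
Let borel_agree n s : borel (agree n s) :=
  borel_cylindrical l_full (cylindrical_agree (n := n) (s := s)).

Lemma phi_mu_eq w : Phi w = mu (inter (fun t => lexle t w) L).
Proof. apply mu_prob. intros t; unfold inter; tauto. Qed.

Lemma mu_singleton s : mu (inter (fun t => t = s) L) = 0.
Proof.
  pose proof (mu_nonneg mu_prob (borel_eq l_full s)).
  destruct (Rle_lt_or_eq_dec _ _ H) as [Hpos|]; auto. exfalso.
  destruct (mu_nonatomic (borel_eq l_full s) Hpos) as [G [BG [HG [H1 H2]]]].
  destruct (classic (G s /\ L s)) as [[Gs Ls]|Hn].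
  - rewrite (mu_ext mu_prob G (fun t => t = s)) in H2; [lra|].
    intros t Lt; split; [apply HG; auto|now intros ->].
  - rewrite (mu_ext mu_prob G (fun _ => False)), (mu_empty mu_prob) in H1; [lra|].
    intros t Lt; split; [|tauto]. intros Gt. apply Hn. now rewrite <- (HG t Lt Gt).
Qed.

Lemma mu_agree_small s eps : L s -> 0 < eps -> exists n, mu (inter (agree n s) L) <= eps.
Proof.
  intros Ls He.
  destruct (proj1 (mu_regular (borel_eq l_full s)) eps He) as [U [HU [HsU Hle]]].
  rewrite mu_singleton, Rplus_0_l in Hle.
  destruct (HU s (HsU s Ls eq_refl)) as [n Hn]. exists n.
  eapply Rle_trans; [|exact Hle].
  apply (mu_mono mu_prob (borel_agree n s) (borel_open l_full HU)).
  intros t _ Ag. now apply Hn.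
Qed.

Lemma phi_mu_mono s1 s2 : lexle s1 s2 -> Phi s1 <= Phi s2.
Proof.
  intros H. rewrite !phi_mu_eq. apply (mu_mono mu_prob (borel_le s1) (borel_le s2)).
  intros t _ Ht. eapply lexle_trans; eauto.
Qed.

(* Singletons are null, so only the words strictly below [s] count. *)
Lemma phi_mu_le_of_below B s : borel B -> (forall t, L t -> lexlt t s -> B t) ->
  Phi s <= mu (inter B L).
Proof.
  intros BB HB. rewrite phi_mu_eq.
  eapply Rle_trans; [|eapply Rle_trans; [apply (mu_subadd mu_prob BB (borel_eq l_full s))|]].
  - apply (mu_mono mu_prob (borel_le s) (borel_or BB (borel_eq l_full s))).
    intros t Lt [<-|Ht]; auto.
  - rewrite mu_singleton. lra.
Qed.

Lemma phi_mu_lt_of_not_lower w s : ~ lower_of_pair ltA L mu w -> L s -> lexlt w s ->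
  Phi w < Phi s.
Proof.
  intros NL Ls Hws. destruct (Rle_lt_or_eq_dec _ _ (phi_mu_mono (or_intror Hws))) as [|E]; auto.
  exfalso. apply NL. now exists s.
Qed.

Lemma phi_mu_le_near n s s' : agree n s s' -> Phi s <= Phi s' + mu (inter (agree n s) L).
Proof.
  intros Ag. pose proof (mu_nonneg mu_prob (borel_agree n s)) as Hnn.
  destruct (lexle_or_lexlt ltA_fta s s') as [Hle|Hlt]; [pose proof (phi_mu_mono Hle); lra|].
  rewrite !phi_mu_eq.
  eapply Rle_trans; [|apply (mu_subadd mu_prob (borel_le s') (borel_agree n s))].
  apply (mu_mono mu_prob (borel_le s) (borel_or (borel_le s') (borel_agree n s))).
  intros t Lt Ht. destruct (lexle_or_lexlt ltA_fta t s') as [H1|H1]; auto.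
  right. exact (agree_of_between ltA_fta Ag H1 Ht).
Qed.

Lemma phi_mu_sublevel_closed x : is_closed (fun s => L s /\ Phi s <= x).
Proof.
  intros s Hs.
  assert (Ls : L s) by (apply L_closed; intros n; destruct (Hs n) as [s' [[] ?]]; eauto).
  split; auto. apply Rnot_lt_le; intros Hlt.
  destruct (mu_agree_small (eps := (Phi s - x) / 2) Ls ltac:(lra)) as [n Hn].
  destruct (Hs n) as [s' [[Ls' Hs'] Ag]].
  pose proof (phi_mu_le_near Ag). lra.
Qed.

(* If [Phi w < x], the words above [w] but near it carry too little mass to reach [x],
   so the least word beyond that neighbourhood would still lie in the sublevel set. *)
Lemma phi_mu_sublevel_max_ge x w : x < 1 -> L w ->
  (forall s, L s -> Phi s <= x -> lexle s w) -> x <= Phi w.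
Proof.
  intros Hx1 Lw Hmax. apply Rnot_lt_le; intros Hlt.
  destruct (mu_agree_small (eps := (x - Phi w) / 2) Lw ltac:(lra)) as [n Hn].
  set (B := fun t => lexle t w \/ agree n w t).
  assert (BB : borel B) by apply (borel_or (borel_le w) (borel_agree n w)).
  assert (HB : mu (inter B L) < x).
  { pose proof (mu_subadd mu_prob (borel_le w) (borel_agree n w)).
    rewrite <- phi_mu_eq in H. fold B in H. lra. }
  set (Far := fun t => lexlt w t /\ ~ agree n w t).
  assert (Far_B : forall t, ~ Far t -> B t).
  { intros t Ht. destruct (lexle_or_lexlt ltA_fta t w) as [H|H]; [now left|].
    right. apply NNPP. intros Hna. now apply Ht. }
  destruct (classic (exists t, L t /\ Far t)) as [Hex|Hno].
  - assert (Far_cyl : cylindrical n Far).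
    { intros t t' Ag [[j [Hj Lj]] Hna].
      assert (Hjn : (j < n)%nat).
      { destruct (Nat.lt_ge_cases j n) as [H|H]; auto.
        exfalso. apply Hna. intros i Hi; apply Hj; lia. }
      split.
      - exists j; split; [intros i Hi; rewrite Hj, Ag; auto; lia|]. rewrite <- Ag; auto.
      - intros Hag. exact (Hna (agree_trans Hag (agree_sym Ag))). }
    destruct (closed_has_min ltA_fta (closed_and L_closed (cylindrical_closed Far_cyl)) Hex)
      as [s0 [[Ls0 Fs0] Hs0]].
    assert (Phi s0 <= mu (inter B L)).
    { apply phi_mu_le_of_below; auto. intros t Lt Hts0. apply Far_B. intros Ft.
      exact (lexle_lexlt_contra ltA_fta (Hs0 t (conj Lt Ft)) Hts0). }
    assert (x < Phi s0).
    { apply Rnot_le_lt. intros Hle. exact (lexle_lexlt_contra ltA_fta (Hmax s0 Ls0 Hle) (proj1 Fs0)). }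
    lra.
  - assert (1 <= mu (inter B L)).
    { apply (mu_ge1_of_cover mu_prob BB). intros t Lt. apply Far_B. eauto. }
    lra.
Qed.

Lemma phi_mu_onto x : 0 <= x < 1 -> (exists w, L w) ->
  exists w, L w /\ Phi w = x /\ ~ lower_of_pair ltA L mu w /\
    (forall s, L s -> Phi s <= x -> lexle s w).
Proof.
  intros Hx Lne.
  assert (Kne : exists s, L s /\ Phi s <= x).
  { destruct (closed_has_min ltA_fta L_closed Lne) as [m0 [Lm0 Hm0]]. exists m0. split; auto.
    assert (Phi m0 <= mu (inter (fun _ => False) L)).
    { apply phi_mu_le_of_below; [apply borel_empty|].
      intros t Lt Ht. exact (lexle_lexlt_contra ltA_fta (Hm0 t Lt) Ht). }
    rewrite (mu_empty mu_prob) in H. lra. }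
  destruct (closed_has_max ltA_fta (phi_mu_sublevel_closed (x := x)) Kne) as [w [[Lw Kw] Hmax]].
  assert (Hmax' : forall s, L s -> Phi s <= x -> lexle s w) by (intros s Ls Hs; apply Hmax; auto).
  assert (Ew : Phi w = x) by (apply Rle_antisym; auto; apply phi_mu_sublevel_max_ge; tauto).
  exists w. repeat split; auto.
  intros [w' [Lw' [Hlt He]]]. refine (lexle_lexlt_contra ltA_fta (Hmax' w' Lw' _) Hlt). lra.
Qed.

Lemma phi_iota_injective w w' x : L w -> L w' ->
  phi ltA L mu w = iota x -> phi ltA L mu w' = iota x -> w = w'.
Proof.
  intros Lw Lw' [Ex NL]%phi_iota_iff [Ex' NL']%phi_iota_iff.
  destruct (lex_trichotomy ltA_fta w w') as [E|[E|E]]; auto; exfalso.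
  - apply NL. exists w'. repeat split; auto. congruence.
  - apply NL'. exists w. repeat split; auto. congruence.
Qed.

Lemma phi_mu_split_prefix p s : prefix p s ->
  Phi s = mu (inter (below_cyl ltA p) L) + mu (inter (fun t => prefix p t /\ lexle t s) L).
Proof.
  intros Ps. rewrite phi_mu_eq.
  rewrite (mu_ext mu_prob _ (fun t => below_cyl ltA p t \/ (prefix p t /\ lexle t s))).
  - apply (mu_add mu_prob).
    + exact (borel_cylindrical l_full (cylindrical_below_cyl (p := p))).
    + exact (borel_and (borel_cyl p) (borel_le s)).
    + intros t _ H1 [H2 _]. exact (below_cyl_not_prefix ltA_fta H1 H2).
  - intros t _; split.
    + intros H. destruct (cyl_trichotomy ltA_fta p t) as [H1|[H1|H1]]; auto.
      exfalso. exact (lexle_lexlt_contra ltA_fta H (lexlt_above_cyl Ps H1)).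
    + intros [H|[_ H]]; auto. right. exact (lexlt_below_cyl Ps H).
Qed.


(* [u] is not left special, so [shift] maps [Cyl (a :: u)] onto [Cyl u] up to a null set. *)
Lemma phi_mu_shift_in_cyl a u w : ~ left_special L u -> L w -> prefix (a :: u) w ->
  Phi (shift w) =
  Phi w + mu (inter (below_cyl ltA u) L) - mu (inter (below_cyl ltA (a :: u)) L).
Proof.
  intros Hu Lw Pw. pose proof Pw as [Wa Pu]%prefix_cons.
  assert (Fau : Fact L (a :: u)) by (exists w; split; auto; exists O; auto).
  rewrite (phi_mu_split_prefix Pu), (phi_mu_split_prefix Pw).
  rewrite <- (mu_invariant (borel_and (borel_cyl u) (borel_le (shift w)))).
  rewrite (mu_ext mu_prob (fun t => prefix u (shift t) /\ lexle (shift t) (shift w))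
                          (fun t => prefix (a :: u) t /\ lexle t w)); [ring|].
  intros t Lt. split.
  - intros [H1 H2]. pose proof (first_letter_forced Hu Fau Lt H1) as Ta.
    split; [now apply prefix_cons|]. apply (lexle_shift ltA_fta); auto. congruence.
  - intros [[Ta H1]%prefix_cons H2]. split; auto. apply (lexle_shift ltA_fta); auto. congruence.
Qed.

Variable v : list A.
Hypothesis cyl_v_nonempty : exists w, Cyl L v w.

Local Notation mu_below := (mu (inter (below_cyl ltA v) L)).
Local Notation mu_not_above := (mu (inter (fun t => below_cyl ltA v t \/ prefix v t) L)).

Let borel_below : borel (below_cyl ltA v) :=
  borel_cylindrical l_full (cylindrical_below_cyl (ltA := ltA) (p := v)).
Let borel_not_above : borel (fun t => below_cyl ltA v t \/ prefix v t) :=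
  borel_or borel_below (borel_cyl v).

Lemma mu_below_lt_not_above : mu_below < mu_not_above.
Proof.
  rewrite (mu_add mu_prob borel_below (borel_cyl v)).
  - assert (0 < mu (Cyl L v)) by auto.
    rewrite (proj1 mu_prob (inter (fun t => prefix v t) L) (Cyl L v)); [lra|].
    intros t; unfold inter, Cyl; tauto.
  - intros t _ H1 H2. exact (below_cyl_not_prefix ltA_fta H1 H2).
Qed.

Lemma I_k_in_range x : I_k ltA L mu v x -> mu_below <= x < mu_not_above.
Proof.
  intros [Hx [w [Lw [[Ex NL]%phi_iota_iff [_ Pw]]]]]. rewrite <- Ex.
  split.
  { rewrite phi_mu_eq. apply (mu_mono mu_prob borel_below (borel_le w)).
    intros t _ Ht. right. exact (lexlt_below_cyl Pw Ht). }
  destruct (classic (exists t, L t /\ above_cyl ltA v t)) as [Hex|Hno].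
  - (* compare with the least word of [L] above the cylinder *)
    destruct (closed_has_min ltA_fta
                (closed_and L_closed (cylindrical_closed (cylindrical_above_cyl (p := v)))) Hex)
      as [s0 [[Ls0 As0] Hs0]].
    apply Rlt_le_trans with (Phi s0).
    + exact (phi_mu_lt_of_not_lower NL Ls0 (lexlt_above_cyl Pw As0)).
    + apply phi_mu_le_of_below; auto. intros t Lt Ht.
      destruct (cyl_trichotomy ltA_fta v t) as [H|[H|H]]; auto.
      exfalso. exact (lexle_lexlt_contra ltA_fta (Hs0 t (conj Lt H)) Ht).
  - apply Rlt_le_trans with 1; [lra|]. apply (mu_ge1_of_cover mu_prob borel_not_above).
    intros t Lt. destruct (cyl_trichotomy ltA_fta v t) as [H|[H|H]]; eauto.
    exfalso; eauto.
Qed.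

Lemma I_k_of_range x : mu_below <= x < mu_not_above -> I_k ltA L mu v x.
Proof.
  intros Hx. destruct cyl_v_nonempty as [w0 [Lw0 Pw0]].
  pose proof (mu_nonneg mu_prob borel_below) as Hlo.
  pose proof (mu_le1 mu_prob borel_not_above) as Hhi.
  destruct (@phi_mu_onto x ltac:(lra) (ex_intro _ w0 Lw0)) as [w [Lw [Ew [NL Hmax]]]].
  split; [lra|]. exists w. split; auto.
  split; [now apply phi_iota_iff|]. split; auto.
  destruct (cyl_trichotomy ltA_fta v w) as [H|[H|H]]; auto; exfalso.
  - (* the least word of the cylinder would lie in the sublevel set of [w] *)
    destruct (closed_has_min ltA_fta
                (closed_and L_closed (cylindrical_closed (cylindrical_prefix (p := v))))
                (ex_intro _ w0 (conj Lw0 Pw0))) as [s0 [[Ls0 Ps0] Hs0]].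
    assert (Phi s0 <= mu_below).
    { apply phi_mu_le_of_below; auto. intros t Lt Ht.
      destruct (cyl_trichotomy ltA_fta v t) as [H1|[H1|H1]]; auto; exfalso.
      - exact (lexle_lexlt_contra ltA_fta (Hs0 t (conj Lt H1)) Ht).
      - exact (lexlt_irrefl ltA_fta (lexlt_trans ltA_fta Ht (lexlt_above_cyl Ps0 H1))). }
    refine (lexle_lexlt_contra ltA_fta (Hmax s0 Ls0 _) (lexlt_below_cyl Ps0 H)). lra.
  - assert (mu_not_above <= Phi w); [|lra].
    rewrite phi_mu_eq. apply (mu_mono mu_prob borel_not_above (borel_le w)).
    intros t _ [Ht|Ht]; right.
    + exact (lexlt_trans ltA_fta (lexlt_below_cyl Pw0 Ht) (lexlt_above_cyl Pw0 H)).
    + exact (lexlt_above_cyl Ht H).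
Qed.

End DistributionFunction.

Theorem mainTheorem12 (A : Type) (ltA : A -> A -> Prop) (L : word A -> Prop)
  (mu : (word A -> Prop) -> R) :
  finite_total_alphabet ltA ->
  is_shift L ->
  (forall n : nat, exists u, (n <= length u)%nat /\ left_special L u) ->
  borel_prob_measure_on L mu ->
  sigma_invariant L mu ->
  nonatomic L mu ->
  regular L mu ->
  positive_on_cylinders L mu ->
  mu (inter (SP_set L) L) = 0 ->
  forall v : list A, is_v_word L v ->
    (exists a b, a < b /\ forall x, I_k ltA L mu v x <-> (a <= x < b)) /\
    (exists c, forall x y, I_k ltA L mu v x -> T_L_graph ltA L mu x y -> y = x + c).
Proof.
  intros Hfta HL _ HM Hinv HN HR HP _ v Hv.
  pose proof Hfta as [[l Hl] _].
  destruct Hv as [a [u [Ev [Fv [_ [Hu _]]]]]].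
  pose proof (cyl_nonempty_of_Fact HL Fv) as Hcyl.
  split.
  - eexists _, _. split; [exact (mu_below_lt_not_above Hl Hfta HM HP Hcyl)|].
    intros x; split.
    + apply (I_k_in_range Hl Hfta (proj1 HL) HM HN).
    + apply (I_k_of_range Hl Hfta (proj1 HL) HM HN HR Hcyl).
  - exists (mu (inter (below_cyl ltA u) L) - mu (inter (below_cyl ltA v) L)).
    intros x y [_ [w [Lw [Hphi [_ Pw]]]]] [w' [Lw' [Hphi' ->]]].
    rewrite <- (phi_iota_injective Hfta Lw Lw' Hphi Hphi').
    apply phi_iota_iff in Hphi as [<- _]. subst v.
    unfold kappa, phi; simpl. rewrite (phi_mu_shift_in_cyl Hl Hfta HM Hinv Hu Lw Pw). ring.
Qed.
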